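(* Let $\mathcal{H}$ be a complex Hilbert space, $A\in\mathcal{B}(\mathcal{H})$ positive and $S\in\mathcal{B}_A(\mathcal{H})$. Then $$d\omega_A^2(S)\le \omega_A^2\left(S^{\sharp_A}S+S\right)+\left\|\left(S^{\sharp_A}S\right)^2+S^{\sharp_A}S\right\|_A .$$
   Context: $\mathcal{B}(\mathcal{H})$ denotes the bounded linear operators on $\mathcal{H}$. For positive $A$, $\langle x,z\rangle_A=\langle Ax,z\rangle$ and $\|z\|_A=\|A^{1/2}z\|$. $\mathcal{B}_A(\mathcal{H})$ is the set of $S\in\mathcal{B}(\mathcal{H})$ for which some $R\in\mathcal{B}(\mathcal{H})$ satisfies $AR=S^*A$; for such $S$, $S^{\sharp_A}=A^{\dagger}S^*A$ with $A^\dagger$ the Moore–Penrose inverse of $A$. For operators $T$ bounded with respect to $\|\cdot\|_A$: $\|T\|_A=\sup_{\|z\|_A=1}\|Tz\|_A$, $\omega_A(T)=\sup_{\|z\|_A=1}|\langle Tz,z\rangle_A|$, and $d\omega_A(T)=\sup_{\|z\|_A=1}(|\langle Tz,z\rangle_A|^2+\|Tz\|_A^4)^{1/2}$. *)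

From HB Require Import structures.
From mathcomp Require Import all_boot all_order all_algebra.
From mathcomp Require Import boolp classical_sets reals.
From mathcomp Require Import complex.

Set Implicit Arguments.
Unset Strict Implicit.
Unset Printing Implicit Defensive.

Import Order.TTheory GRing.Theory Num.Theory.
Local Open Scope ring_scope.
Local Open Scope classical_set_scope.

Section HilbertDefs.
Variable R : realType.
Local Notation C := (R[i]).
Variable H : lmodType C.
Variable ip : H -> H -> C.

Definition cabs (z : C) : R := complex.Re `|z|.

Definition hnorm (x : H) : R := Num.sqrt (complex.Re (ip x x)).

Definition is_complex_hilbert : Prop :=
  [/\ (forall (a : C) (x y z : H), ip (a *: x + y) z = a * ip x z + ip y z),
      (forall x y : H, ip y x = conjc (ip x y)),
      (forall x : H, 0 <= ip x x),
      (forall x : H, ip x x = 0 -> x = 0) &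
      (forall u : nat -> H,
         (forall e : R, 0 < e -> exists N : nat, forall m n : nat,
             (N <= m)%N -> (N <= n)%N -> hnorm (u m - u n) < e) ->
         exists l : H, forall e : R, 0 < e -> exists N : nat, forall n : nat,
             (N <= n)%N -> hnorm (u n - l) < e)].

Definition bounded_op (T : H -> H) : Prop :=
  (forall (a : C) (x y : H), T (a *: x + y) = a *: T x + T y) /\
  exists M : R, forall x : H, hnorm (T x) <= M * hnorm x.

(* Hilbert adjoint T^* : the (unique, for bounded T) operator with
   <T x, y> = <x, T^* y>. *)
Definition adjoint (T : H -> H) : H -> H :=
  fun y => xget 0 [set z | forall x : H, ip (T x) y = ip x z].

Definition positive_op (A : H -> H) : Prop :=
  bounded_op A /\ forall x : H, 0 <= ip (A x) x.

(* Moore-Penrose inverse of A applied to y (y in R(A) (+) R(A)^perp):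
   the unique x in N(A)^perp with A x - y in R(A)^perp, i.e. A x = P_{cl R(A)} y. *)
Definition mp_inv (A : H -> H) (y : H) : H :=
  xget 0 [set x | (forall u : H, A u = 0 -> ip x u = 0) /\
                  (forall w : H, ip (A x - y) (A w) = 0)].

Definition in_BA (A S : H -> H) : Prop :=
  bounded_op S /\ exists Rop : H -> H, bounded_op Rop /\
    forall x : H, A (Rop x) = adjoint S (A x).

Definition sharpA (A S : H -> H) : H -> H :=
  fun z => mp_inv A (adjoint S (A z)).

Definition ipA (A : H -> H) (x z : H) : C := ip (A x) z.
Definition normA (A : H -> H) (z : H) : R := Num.sqrt (complex.Re (ipA A z z)).

Definition unitA (A : H -> H) : set H := [set z | normA A z = 1].

Definition opnormA (A T : H -> H) : R :=
  sup [set normA A (T z) | z in unitA A].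
Definition numradA (A T : H -> H) : R :=
  sup [set cabs (ipA A (T z) z) | z in unitA A].
Definition dnumradA (A T : H -> H) : R :=
  sup [set Num.sqrt (cabs (ipA A (T z) z) ^+ 2 + normA A (T z) ^+ 4) | z in unitA A].

End HilbertDefs.

(* For positive A the form <x, y>_A = <A x, y> is a semi-inner product (a
   positive operator is Hermitian), and T := S^{#A} S satisfies
   <T u, x>_A = <S u, S x>_A; the adjoint and the Moore-Penrose inverse occurring
   in S^{#A} are well defined thanks to the projection and Riesz theorems.
   For an A-unit z let a = ||S z||_A^2 and b = <S z, z>_A. Then
   <(T + S) z, z>_A = a + b and <(T^2 + T) z, z>_A = ||T z||_A^2 + a, while
   Cauchy-Schwarz gives |b|^2 <= a and a^2 <= ||T z||_A^2. Hence
   |a + b|^2 + ||T z||_A^2 + a - |b|^2 - a^2 >= (a + Re b)^2 >= 0, and taking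
   suprema gives the claim. If the supremum on the left is finite, S and then T
   are A-bounded, so the suprema on the right are finite as well. *)

From Pilot Require Import Defs.
From HB Require Import structures.
From mathcomp Require Import all_boot all_order all_algebra.
From mathcomp Require Import boolp classical_sets reals.
From mathcomp Require Import complex.
From mathcomp Require Import ring lra.

Set Implicit Arguments.
Unset Strict Implicit.
Unset Printing Implicit Defensive.
Import Order.TTheory GRing.Theory Num.Theory.
Local Open Scope ring_scope.
Local Open Scope complex_scope.
Local Open Scope classical_set_scope.
Local Notation Re := complex.Re.
Local Notation Im := complex.Im.

Lemma le_mul_of_quadratic_ge0 (R : realFieldType) (a b k : R) :
  0 <= k -> 0 <= b -> (forall t, 0 <= a - 2 * t * k + t ^+ 2 * k * b) ->
  k <= a * b.
Proof.
move=> k0 b0 hquad; have [b_eq0|b_neq0] := eqVneq b 0.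
  rewrite b_eq0 mulr0; have [->//|k_neq0] := eqVneq k 0.
  have := hquad ((a + 1) / (2 * k)); rewrite b_eq0 mulr0 addr0.
  have -> : 2 * ((a + 1) / (2 * k)) * k = a + 1 by field.
  lra.
have b_gt0 : 0 < b by rewrite lt_def b_neq0.
have := hquad b^-1.
have -> : a - 2 * b^-1 * k + b^-1 ^+ 2 * k * b = (a * b - k) / b by field.
by rewrite pmulr_lge0 ?invr_gt0 // subr_ge0.
Qed.

Lemma invS_lt_eventually (R : realType) (e : R) :
  0 < e -> exists N, forall n, (N <= n)%N -> n.+1%:R^-1 < e.
Proof.
move=> e_gt0; exists (Num.truncn e^-1) => n le_Nn.
rewrite invf_plt ?posrE ?ltr0Sn //.
by apply: lt_le_trans (truncnS_gt _) _; rewrite ler_nat ltnS.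
Qed.

Section ComplexModulus.
Variable R : realType.
Implicit Types (z : R[i]) (r : R).

Lemma cabsE z : cabs z = Num.sqrt (Re z ^+ 2 + Im z ^+ 2).
Proof. by rewrite /cabs normc_def. Qed.

Lemma cabs_ge0 z : 0 <= cabs z.
Proof. by rewrite cabsE sqrtr_ge0. Qed.

Lemma cabs_sqr z : cabs z ^+ 2 = Re z ^+ 2 + Im z ^+ 2.
Proof. by rewrite cabsE sqr_sqrtr // addr_ge0 ?sqr_ge0. Qed.

Lemma cabsR r : cabs r%:C = `|r|.
Proof. by rewrite cabsE /= expr0n addr0 sqrtr_sqr. Qed.

Lemma Re_le_cabs z : Re z <= cabs z.
Proof.
have [Re_le0|Re_gt0] := lerP (Re z) 0; first exact: le_trans Re_le0 (cabs_ge0 z).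
rewrite -(ler_pXn2r (_ : 0 < 2)%N) ?nnegrE ?(ltW Re_gt0) ?cabs_ge0 // cabs_sqr.
by rewrite lerDl sqr_ge0.
Qed.

Lemma cabs_eq0 z : cabs z = 0 -> z = 0.
Proof.
move=> /(congr1 (fun r => r ^+ 2)); rewrite cabs_sqr expr0n /= => /eqP.
rewrite paddr_eq0 ?sqr_ge0 // !sqrf_eq0 => /andP[/eqP Re0 /eqP Im0].
by case: z Re0 Im0 => /= a b -> ->.
Qed.

Lemma cabs_sqrC z : (cabs z ^+ 2)%:C = z * conjc z.
Proof.
by rewrite cabs_sqr -sqr_normc normc_def -rmorphXn /= sqr_sqrtr // addr_ge0 ?sqr_ge0.
Qed.

Lemma Re_conjc z : Re (conjc z) = Re z.
Proof. by case: z. Qed.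

Lemma conjc_realM r z : conjc (r%:C * z) = r%:C * conjc z.
Proof. by rewrite rmorphM; congr (_ * _); exact: conjc_real. Qed.

Lemma ge0_complexE z : 0 <= z -> z = (Re z)%:C.
Proof. by case: z => a b; rewrite lecE /= => /andP[/eqP -> _]. Qed.

End ComplexModulus.

Definition semi_inner_product (R : realType) (H : lmodType R[i])
    (q : H -> H -> R[i]) : Prop :=
  [/\ forall a x y z, q (a *: x + y) z = a * q x z + q y z,
      forall x y, q y x = conjc (q x y) &
      forall x, 0 <= q x x].

Definition hnorm_closed (R : realType) (H : lmodType R[i])
    (q : H -> H -> R[i]) (P : {pred H}) : Prop :=
  forall x, (forall e, 0 < e -> exists2 m, m \in P & hnorm q (x - m) < e) ->
  x \in P.

Section SemiInnerProduct.
Variables (R : realType) (H : lmodType R[i]) (q : H -> H -> R[i]).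
Hypothesis hq : semi_inner_product q.

Lemma qPl a x y z : q (a *: x + y) z = a * q x z + q y z.
Proof. by case: hq. Qed.
Lemma hermC x y : q y x = conjc (q x y).
Proof. by case: hq. Qed.
Lemma qxx_ge0 x : 0 <= q x x.
Proof. by case: hq. Qed.

Lemma q0l z : q 0 z = 0.
Proof.
have := qPl 1 0 0 z; rewrite scaler0 addr0 mul1r => q0_twice.
by apply: (addrI (q 0 z)); rewrite addr0 -q0_twice.
Qed.
Lemma qDl x y z : q (x + y) z = q x z + q y z.
Proof. by rewrite -[x]scale1r qPl mul1r scale1r. Qed.
Lemma qZl a x z : q (a *: x) z = a * q x z.
Proof. by rewrite -[a *: x]addr0 qPl q0l addr0. Qed.
Lemma qNl x z : q (- x) z = - q x z.
Proof. by rewrite -scaleN1r qZl mulN1r. Qed.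
Lemma qBl x y z : q (x - y) z = q x z - q y z.
Proof. by rewrite qDl qNl. Qed.
Lemma q0r z : q z 0 = 0.
Proof. by rewrite hermC q0l rmorph0. Qed.
Lemma qDr x y z : q z (x + y) = q z x + q z y.
Proof. by rewrite !(hermC _ z) qDl rmorphD. Qed.
Lemma qZr a x z : q z (a *: x) = conjc a * q z x.
Proof. by rewrite !(hermC _ z) qZl rmorphM. Qed.
Lemma qNr x z : q z (- x) = - q z x.
Proof. by rewrite !(hermC _ z) qNl rmorphN. Qed.
Lemma qBr x y z : q z (x - y) = q z x - q z y.
Proof. by rewrite qDr qNr. Qed.

Lemma hnorm_ge0 x : 0 <= hnorm q x.
Proof. exact: sqrtr_ge0. Qed.

Lemma hnorm_sqr x : hnorm q x ^+ 2 = Re (q x x).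
Proof. by rewrite sqr_sqrtr //; move: (qxx_ge0 x); rewrite lecE => /andP[]. Qed.

Lemma qxx x : q x x = (hnorm q x ^+ 2)%:C.
Proof. by rewrite hnorm_sqr -ge0_complexE ?qxx_ge0. Qed.

Lemma hnormN x : hnorm q (- x) = hnorm q x.
Proof. by rewrite /hnorm qNl qNr opprK. Qed.

Lemma hnormZr (c : R) x : hnorm q (c%:C *: x) = `|c| * hnorm q x.
Proof.
rewrite /hnorm qZl qZr conjc_real mulrA -rmorphM qxx -rmorphM /=.
by rewrite -expr2 sqrtrM ?sqr_ge0 // !sqrtr_sqr (ger0_norm (hnorm_ge0 x)).
Qed.

Lemma hnorm_subZ_sqr x y (t : R) :
  hnorm q (x - (t%:C * q x y) *: y) ^+ 2 =
  hnorm q x ^+ 2 - 2 * t * cabs (q x y) ^+ 2 + t ^+ 2 * cabs (q x y) ^+ 2 * hnorm q y ^+ 2.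
Proof.
apply: complexI; rewrite -qxx qBl !qBr !qZl !qZr (hermC x y) !qxx conjc_realM.
ring: (cabs_sqrC (q x y)).
Qed.

Lemma hnorm_closed_of_bound (P : {pred H}) (g : H -> R) (M : R) :
  (forall x, x \notin P -> 0 < g x) ->
  (forall x m, m \in P -> g x <= M * hnorm q (x - m)) -> hnorm_closed q P.
Proof.
move=> g_gt0 g_le x x_adh; apply/negPn/negP => /g_gt0 gx_gt0.
have M1_gt0 : 0 < `|M| + 1 by rewrite ltr_pwDr.
have [m Pm] := x_adh _ (divr_gt0 gx_gt0 M1_gt0).
rewrite ltr_pdivlMr // => near_x.
have := g_le x m Pm; have := hnorm_ge0 (x - m); have := ler_norm M; nra.
Qed.

Lemma cauchy_schwarz x y : cabs (q x y) <= hnorm q x * hnorm q y.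
Proof.
rewrite -(ler_pXn2r (_ : 0 < 2)%N) ?nnegrE ?cabs_ge0 ?mulr_ge0 ?hnorm_ge0 //.
rewrite exprMn; apply: le_mul_of_quadratic_ge0; rewrite ?sqr_ge0 // => t.
by rewrite -hnorm_subZ_sqr sqr_ge0.
Qed.

Lemma hnormD_sqr x y :
  hnorm q (x + y) ^+ 2 = hnorm q x ^+ 2 + hnorm q y ^+ 2 + 2 * Re (q x y).
Proof. by rewrite !hnorm_sqr qDl !qDr (hermC x y) !raddfD /= Re_conjc; ring. Qed.

Lemma hnormD_le x y : hnorm q (x + y) <= hnorm q x + hnorm q y.
Proof.
rewrite -(ler_pXn2r (_ : 0 < 2)%N) ?nnegrE ?addr_ge0 ?hnorm_ge0 //.
have := le_trans (Re_le_cabs (q x y)) (cauchy_schwarz x y).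
rewrite hnormD_sqr sqrrD; lra.
Qed.

Lemma parallelogram x y :
  hnorm q (x + y) ^+ 2 + hnorm q (x - y) ^+ 2 =
  2 * hnorm q x ^+ 2 + 2 * hnorm q y ^+ 2.
Proof. by rewrite !hnormD_sqr hnormN qNr raddfN /=; ring. Qed.

Lemma orthogonal_of_minimizer (P : {pred H}) r m :
  submod_closed P -> m \in P ->
  (forall v, v \in P -> hnorm q (r - m) <= hnorm q (r - v)) ->
  forall v, v \in P -> q (r - m) v = 0.
Proof.
move=> [_ Plin] Pm m_min v Pv; apply: cabs_eq0; apply/eqP.
rewrite -sqrf_eq0 eq_le sqr_ge0 andbT -(mul0r (hnorm q v ^+ 2)).
apply: le_mul_of_quadratic_ge0; rewrite ?sqr_ge0 // => t.
have := m_min _ (Plin (t%:C * q (r - m) v) _ _ Pv Pm).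
rewrite -(ler_pXn2r (_ : 0 < 2)%N) ?nnegrE ?hnorm_ge0 //.
by rewrite [_ *: v + m]addrC opprD addrA hnorm_subZ_sqr; lra.
Qed.

(* Parallelogram law for r - x and r - y, whose sum is twice r minus the
   midpoint of x and y, which lies in P. *)
Lemma hnorm_sub_sqr_le_inf (P : {pred H}) r d x y :
  submod_closed P -> 0 <= d -> (forall m, m \in P -> d <= hnorm q (r - m)) ->
  x \in P -> y \in P ->
  hnorm q (x - y) ^+ 2 <=
  2 * (hnorm q (r - x) ^+ 2 - d ^+ 2) + 2 * (hnorm q (r - y) ^+ 2 - d ^+ 2).
Proof.
move=> [P0 Plin] d_ge0 d_le Px Py.
have Pmid : 2^-1%:C *: (x + y) \in P.
  by rewrite -[_ *: _]addr0 Plin // -[x]scale1r Plin.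
have := d_le _ Pmid; rewrite -(ler_pXn2r (_ : 0 < 2)%N) ?nnegrE ?hnorm_ge0 //.
have two_mid : (r - y) + (r - x) = 2%:C *: (r - 2^-1%:C *: (x + y)).
  rewrite scalerBr scalerA -rmorphM mulfV ?pnatr_eq0 // scale1r.
  by rewrite rmorph_nat scaler_nat mulr2n addrACA -opprD [y + x]addrC.
have := parallelogram (r - y) (r - x).
rewrite two_mid hnormZr (_ : (r - y) - (r - x) = x - y); last first.
  by rewrite opprB addrC addrA subrK.
rewrite ger0_norm ?ler0n // exprMn; lra.
Qed.

Lemma minimizing_cauchy (P : {pred H}) r d (f : nat -> H) :
  submod_closed P -> 0 <= d -> (forall m, m \in P -> d <= hnorm q (r - m)) ->
  (forall n, f n \in P) -> (forall n, hnorm q (r - f n) < d + n.+1%:R^-1) ->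
  forall e, 0 < e -> exists N, forall m n, (N <= m)%N -> (N <= n)%N ->
    hnorm q (f m - f n) < e.
Proof.
move=> Psub d_ge0 d_le fP f_lt e e_gt0.
have c_gt0 : 0 < 2 * d + 1 by lra.
have [N N_lt] := invS_lt_eventually (divr_gt0 (mulr_gt0 e_gt0 e_gt0) (mulr_gt0 (ltr0n _ 4) c_gt0)).
exists N => m n le_Nm le_Nn.
have excess_small k : (N <= k)%N -> hnorm q (r - f k) ^+ 2 - d ^+ 2 < e * e / 4.
  move=> /N_lt; rewrite ltr_pdivlMr ?mulr_gt0 //.
  have : k.+1%:R^-1 <= 1 :> R by rewrite invf_le1 ?ler1n ?ltr0Sn.
  have a_ge0 : 0 <= k.+1%:R^-1 :> R by rewrite invr_ge0 ler0n.
  have : hnorm q (r - f k) ^+ 2 <= (d + k.+1%:R^-1) ^+ 2.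
    by rewrite ler_pXn2r ?nnegrE ?hnorm_ge0 ?addr_ge0 ?(ltW (f_lt k)).
  move: a_ge0; set a := k.+1%:R^-1; nra.
have := hnorm_sub_sqr_le_inf Psub d_ge0 d_le (fP m) (fP n).
rewrite -(ltr_pXn2r (_ : 0 < 2)%N) ?nnegrE ?hnorm_ge0 ?(ltW e_gt0) // expr2.
have := excess_small _ le_Nm; have := excess_small _ le_Nn; lra.
Qed.

End SemiInnerProduct.

Lemma hilbert_semi_inner_product (R : realType) (H : lmodType R[i])
    (ip : H -> H -> R[i]) :
  is_complex_hilbert ip -> semi_inner_product ip.
Proof. by case. Qed.

Section Hilbert.
Variables (R : realType) (H : lmodType R[i]) (ip : H -> H -> R[i]).
Hypothesis hH : is_complex_hilbert ip.

Let hip : semi_inner_product ip := hilbert_semi_inner_product hH.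

Let ip_definite x : ip x x = 0 -> x = 0.
Proof. by case: hH => _ _ _ /(_ x). Qed.

Let hnorm_eq0 x : hnorm ip x = 0 -> x = 0.
Proof. by move=> hx0; apply: ip_definite; rewrite (qxx hip) hx0 expr0n. Qed.

Lemma projection_theorem (P : {pred H}) :
  submod_closed P -> hnorm_closed ip P ->
  forall r, exists2 m, m \in P & forall v, v \in P -> ip (r - m) v = 0.
Proof.
move=> Psub Pclosed r.
pose D := [set t : R | exists2 m, m \in P & hnorm ip (r - m) = t].
have D_inf : has_inf D.
  split; first by exists (hnorm ip (r - 0)), 0; first by case: Psub.
  by exists 0 => _ [m _ <-]; exact: hnorm_ge0.
have d_le m : m \in P -> inf D <= hnorm ip (r - m).
  by move=> Pm; apply: (ge_inf D_inf.2); exists m.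
have d_ge0 : 0 <= inf D.
  by apply: (lb_le_inf D_inf.1) => _ [m _ <-]; exact: hnorm_ge0.
have adherent n : exists m, m \in P /\ hnorm ip (r - m) < inf D + n.+1%:R^-1.
  have n_gt0 : 0 < n.+1%:R^-1 :> R by rewrite invr_gt0 ltr0Sn.
  by have [_ [m Pm <-] m_lt] := inf_adherent n_gt0 D_inf; exists m.
have [f f_min] := choice adherent.
have [l f_to_l] : exists l, forall e, 0 < e ->
    exists N, forall n, (N <= n)%N -> hnorm ip (f n - l) < e.
  case: hH => _ _ _ _; apply; apply: (minimizing_cauchy hip Psub d_ge0 d_le).
    by move=> n; case: (f_min n).
  by move=> n; case: (f_min n).
have Pl : l \in P.
  apply: Pclosed => e e_gt0; have [N fN] := f_to_l e e_gt0.
  by exists (f N); [case: (f_min N) | rewrite -(hnormN hip) opprB fN].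
exists l => //; apply: (orthogonal_of_minimizer hip) => // v Pv.
apply: le_trans (d_le _ Pv); apply/ler_addgt0Pr => e e_gt0.
have e2_gt0 : 0 < e / 2 by rewrite divr_gt0.
have [N1 N1_lt] := invS_lt_eventually e2_gt0; have [N2 N2_lt] := f_to_l _ e2_gt0.
pose n := maxn N1 N2.
have := N1_lt n (leq_maxl N1 N2); have := N2_lt n (leq_maxr N1 N2).
have := (f_min n).2; have := hnormD_le hip (r - f n) (f n - l).
by rewrite addrA subrK; set i := n.+1%:R^-1; lra.
Qed.

Section RieszRepresentation.
Variable f : H -> R[i].
Hypothesis f_scalar : scalar f.
HB.instance Definition _ := GRing.isLinear.Build R[i] H R[i] *%R f f_scalar.

Lemma riesz_representation (M : R) :
  (forall x, cabs (f x) <= M * hnorm ip x) -> exists z, forall x, f x = ip x z.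
Proof.
move=> f_bounded.
have [f_eq0|/existsNP[x0 /eqP fx0_neq0]] := pselect (forall x, f x = 0).
  by exists 0 => x; rewrite f_eq0 (q0r hip).
pose P := [pred x | f x == 0].
have Psub : submod_closed P.
  split=> [|a u v]; rewrite !inE ?linear0 // => /eqP fu /eqP fv.
  by rewrite linearP /= fu fv mulr0 addr0.
have Pclosed : hnorm_closed ip P.
  apply: (@hnorm_closed_of_bound _ _ _ _ (fun x => cabs (f x)) M) => [x|x m].
    rewrite inE lt_def cabs_ge0 andbT => fx_neq0.
    by apply: contra_neq fx_neq0 => /cabs_eq0.
  by rewrite inE => /eqP fm0; rewrite -[f x]subr0 -fm0 -linearB /= f_bounded.
have [m Pm orth] := projection_theorem Psub Pclosed x0.
set p := x0 - m.
have fp : f p = f x0 by move: Pm; rewrite inE => /eqP fm0; rewrite linearB /= fm0 subr0.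
have fp_neq0 : f p != 0 by rewrite fp.
have ipp_neq0 : ip p p != 0.
  by apply: contra_neq fp_neq0 => /ip_definite ->; rewrite linear0.
have orth_x x : ip x p = f x / f p * ip p p.
  have Px : x - (f x / f p) *: p \in P by rewrite inE linearB linearZ /= divfK ?subrr.
  by apply/eqP; rewrite -subr_eq0 -(qZl hip) -(qBl hip) (hermC hip) orth // rmorph0.
exists (conjc (f p / ip p p) *: p) => x.
by rewrite (qZr hip) conjcK (orth_x x); field; rewrite fp_neq0 ipp_neq0.
Qed.

End RieszRepresentation.

Section MoorePenroseInverse.
Variable A : H -> H.
Hypothesis hA : bounded_op ip A.
HB.instance Definition _ := GRing.isLinear.Build R[i] H H *:%R A hA.1.

Lemma A_mp_inv_A r : A (mp_inv ip A (A r)) = A r.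
Proof.
case: hA => _ [M A_bounded].
pose P := [pred x | A x == 0].
have Psub : submod_closed P.
  split=> [|a u v]; rewrite !inE ?linear0 // => /eqP Au /eqP Av.
  by rewrite linearP /= Au Av scaler0 addr0.
have Pclosed : hnorm_closed ip P.
  apply: (@hnorm_closed_of_bound _ _ _ _ (fun x => hnorm ip (A x)) M) => [x|x m].
    rewrite inE lt_def hnorm_ge0 andbT => Ax_neq0.
    by apply: contra_neq Ax_neq0 => /hnorm_eq0.
  by rewrite inE => /eqP Am0; rewrite -[A x]subr0 -Am0 -linearB /= A_bounded.
have [m Pm orth] := projection_theorem Psub Pclosed r.
(* r minus its projection onto ker A lies in the set that mp_inv picks from. *)
have mp_inv_exists : exists x, (forall u, A u = 0 -> ip x u = 0) /\
                               (forall w, ip (A x - A r) (A w) = 0).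
  exists (r - m); split=> [u Au0|w]; first by apply: orth; rewrite inE Au0.
  by move: Pm; rewrite inE => /eqP Am0; rewrite linearB /= Am0 subr0 subrr (q0l hip).
have [_ mp_inv_orth] := xgetPex 0 mp_inv_exists.
rewrite -/(mp_inv ip A (A r)) in mp_inv_orth.
have := mp_inv_orth (mp_inv ip A (A r) - r).
by rewrite linearB /= => /ip_definite/eqP; rewrite subr_eq0 => /eqP.
Qed.

End MoorePenroseInverse.

Lemma adjointP S : bounded_op ip S ->
  forall y x, ip (S x) y = ip x (adjoint ip S y).
Proof.
move=> [S_lin [M S_bounded]] y.
have S_scalar : scalar (fun x => ip (S x) y).
  by move=> a u v; rewrite /= S_lin qPl.
have S_bounded_y x : cabs (ip (S x) y) <= M * hnorm ip y * hnorm ip x.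
  apply: le_trans (cauchy_schwarz hip _ _) _.
  by rewrite mulrAC ler_wpM2r ?hnorm_ge0.
have [z z_rep] := riesz_representation S_scalar S_bounded_y.
exact: (xgetPex 0 (P := [set z | forall x, ip (S x) y = ip x z]) (ex_intro _ z z_rep)).
Qed.

Lemma ipA_sharpA A S : bounded_op ip A -> in_BA ip A S ->
  forall w x, ipA ip A (sharpA ip A S w) x = ipA ip A w (S x).
Proof.
move=> hA [hS [Rop [_ A_Rop]]] w x.
by rewrite /ipA /sharpA -A_Rop A_mp_inv_A // A_Rop (hermC hip) -adjointP // -(hermC hip).
Qed.

End Hilbert.

Section PositiveOperator.
Variables (R : realType) (H : lmodType R[i]) (ip : H -> H -> R[i]) (A : H -> H).
Hypotheses (hip : semi_inner_product ip) (hA : positive_op ip A).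
HB.instance Definition _ := GRing.isLinear.Build R[i] H H *:%R A hA.1.1.

Lemma ipA_semi_inner_product : semi_inner_product (ipA ip A).
Proof.
have Im_diag z : Im (ip (A z) z) = 0 by rewrite ger0_Im ?hA.2.
split=> [a x y z|x y|x]; rewrite /ipA; last exact: hA.2.
  by rewrite linearP /= (qPl hip).
(* Polarization: the diagonal terms at x + y and x + 'i y are real. *)
have := Im_diag (x + y); have := Im_diag (x + 'i *: y).
rewrite !linearD !linearZ /= !(qDl hip) !(qDr hip) !(qZl hip) !(qZr hip) !raddfD /= !Im_diag.
have := Im_diag y.
move: (ip (A x) y) (ip (A y) x) (ip (A y) y) => [a b] [c d] [e f] /= Im_yy Im_xiy Im_xy.
by apply/eqP; rewrite eq_complex /=; apply/andP; split; apply/eqP; lra.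
Qed.

End PositiveOperator.

Lemma sup_ge0 (R : realType) (E : set R) : (forall x, E x -> 0 <= x) -> 0 <= sup E.
Proof.
move=> E_ge0; have [E_sup|/sup_out ->//] := pselect (has_sup E).
have [[x Ex] _] := E_sup; exact: le_trans (E_ge0 _ Ex) (sup_upper_bound E_sup Ex).
Qed.

Lemma sup_sqr_le (R : realType) (T : Type) (D : set T) (f g h : T -> R) :
  (forall z, D z -> 0 <= f z) -> (forall z, D z -> 0 <= g z) ->
  (forall z, D z -> 0 <= h z) -> (forall z, D z -> f z ^+ 2 <= g z ^+ 2 + h z) ->
  (has_ubound (f @` D) -> has_ubound (g @` D) /\ has_ubound (h @` D)) ->
  sup (f @` D) ^+ 2 <= sup (g @` D) ^+ 2 + sup (h @` D).
Proof.
move=> f_ge0 g_ge0 h_ge0 f_le g_h_bounded.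
have sup_img_ge0 (k : T -> R) : (forall z, D z -> 0 <= k z) -> 0 <= sup (k @` D).
  by move=> k_ge0; apply: sup_ge0 => _ [z Dz <-]; exact: k_ge0.
have [f_sup|/sup_out ->] := pselect (has_sup (f @` D)); last first.
  by rewrite expr0n addr_ge0 ?sqr_ge0 ?sup_img_ge0.
have [g_ub h_ub] := g_h_bounded f_sup.2.
have [[_ [z0 Dz0 _]] _] := f_sup.
have g_sup : has_sup (g @` D) by split=> //; exists (g z0), z0.
have h_sup : has_sup (h @` D) by split=> //; exists (h z0), z0.
have bound_ge0 : 0 <= sup (g @` D) ^+ 2 + sup (h @` D).
  by rewrite addr_ge0 ?sqr_ge0 ?sup_img_ge0.
rewrite -(sqr_sqrtr bound_ge0) ler_pXn2r ?nnegrE ?sqrtr_ge0 ?sup_img_ge0 //.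
apply: ge_sup => [|_ [z Dz <-]]; first by exists (f z0), z0.
rewrite -(ger0_norm (f_ge0 _ Dz)) -sqrtr_sqr ler_sqrt //.
apply: le_trans (f_le _ Dz) (lerD _ (sup_upper_bound h_sup _)); last by exists z.
rewrite ler_pXn2r ?nnegrE ?g_ge0 ?sup_img_ge0 //.
by apply: (sup_upper_bound g_sup); exists z.
Qed.

Section SharpProduct.
Variables (R : realType) (H : lmodType R[i]) (q : H -> H -> R[i]) (S T : H -> H).
Hypotheses (hq : semi_inner_product q) (S_lin : linear S).
Hypothesis qT : forall u x, q (T u) x = q (S u) (S x).
HB.instance Definition _ := GRing.isLinear.Build R[i] H H *:%R S S_lin.

Lemma hnormS_eq0 x : hnorm q x = 0 -> hnorm q (S x) = 0.
Proof.
move=> x0; apply/eqP; rewrite -sqrf_eq0 eq_le sqr_ge0 andbT (hnorm_sqr hq) -qT.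
apply: le_trans (Re_le_cabs _) _; apply: le_trans (cauchy_schwarz hq _ _) _.
by rewrite x0 mulr0.
Qed.

Lemma hnormS_le k : (forall z, hnorm q z = 1 -> hnorm q (S z) <= k) ->
  forall x, hnorm q (S x) <= k * hnorm q x.
Proof.
move=> S_unit x; have [x0|x_neq0] := eqVneq (hnorm q x) 0.
  by rewrite hnormS_eq0 // x0 mulr0.
have x_gt0 : 0 < hnorm q x by rewrite lt_def x_neq0 hnorm_ge0.
have := S_unit ((hnorm q x)^-1%:C *: x).
rewrite linearZ /= !(hnormZr hq) ger0_norm ?invr_ge0 ?hnorm_ge0 // mulVf //.
by rewrite ler_pdivrMl // mulrC => /(_ erefl).
Qed.

Lemma hnormT_le k : 0 <= k -> (forall x, hnorm q (S x) <= k * hnorm q x) ->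
  forall x, hnorm q (T x) <= k ^+ 2 * hnorm q x.
Proof.
move=> k_ge0 S_le x.
have Tx_sqr : hnorm q (T x) ^+ 2 <= k ^+ 2 * hnorm q x * hnorm q (T x).
  rewrite (hnorm_sqr hq) qT; apply: le_trans (Re_le_cabs _) _.
  apply: le_trans (cauchy_schwarz hq _ _) _.
  rewrite (_ : _ * _ * _ = k * hnorm q x * (k * hnorm q (T x))); last by ring.
  by apply: ler_pM; rewrite ?hnorm_ge0.
have c_ge0 : 0 <= k ^+ 2 * hnorm q x by rewrite mulr_ge0 ?sqr_ge0 ?hnorm_ge0.
move: Tx_sqr c_ge0 (hnorm_ge0 q (T x)).
set y := hnorm q (T x); set c := k ^+ 2 * hnorm q x; nra.
Qed.

Lemma dnumrad_sqr_le_pointwise z : hnorm q z = 1 ->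
  cabs (q (S z) z) ^+ 2 + hnorm q (S z) ^+ 4 <=
  cabs (q (T z + S z) z) ^+ 2 + hnorm q (T (T z) + T z).
Proof.
move=> z1; set a := hnorm q (S z) ^+ 2.
have qTz : q (T z) z = a%:C by rewrite qT (qxx hq).
have b_le : cabs (q (S z) z) ^+ 2 <= a.
  have := cauchy_schwarz hq (S z) z; rewrite z1 mulr1.
  by rewrite -(ler_pXn2r (_ : 0 < 2)%N) ?nnegrE ?cabs_ge0 ?hnorm_ge0.
have a_le : a ^+ 2 <= hnorm q (T z) ^+ 2.
  have := cauchy_schwarz hq (T z) z; rewrite z1 mulr1 qTz cabsR ger0_norm ?sqr_ge0 //.
  by rewrite -(ler_pXn2r (_ : 0 < 2)%N) ?nnegrE ?sqr_ge0 ?hnorm_ge0.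
have qTTz : q (T (T z) + T z) z = (hnorm q (T z) ^+ 2 + a)%:C.
  rewrite (qDl hq) qT (hermC hq (S z)) -qT (qxx hq (T z)) conjc_real qTz.
  by rewrite -rmorphD.
have TTz_le : hnorm q (T z) ^+ 2 + a <= hnorm q (T (T z) + T z).
  have := cauchy_schwarz hq (T (T z) + T z) z; rewrite z1 mulr1 qTTz cabsR.
  by rewrite ger0_norm // addr_ge0 ?sqr_ge0.
have -> : hnorm q (S z) ^+ 4 = a ^+ 2 by rewrite /a -exprM.
rewrite (qDl hq) qTz !cabs_sqr in b_le *.
move: (q (S z) z) b_le => [rb ib] /= b_le.
have := sqr_ge0 (a + rb); nra.
Qed.

(* The quantities of Defs depend on A only through the form ipA ip A; taking
   A := id, they are those of an arbitrary semi-inner product q. *)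
Lemma dnumrad_sqr_le :
  dnumradA q id S ^+ 2 <=
  numradA q id (fun z => T z + S z) ^+ 2 + opnormA q id (fun z => T (T z) + T z).
Proof.
apply: sup_sqr_le => [z _|z _|z _|z z1|[K K_ub]].
- exact: sqrtr_ge0.
- exact: cabs_ge0.
- exact: hnorm_ge0.
- rewrite sqr_sqrtr ?addr_ge0 ?sqr_ge0 ?exprn_ge0 ?sqrtr_ge0 //.
  exact: dnumrad_sqr_le_pointwise.
have S_unit z : hnorm q z = 1 -> hnorm q (S z) <= Num.sqrt K.
  move=> z1; have fz_le := K_ub _ (ex_intro2 _ _ z z1 erefl).
  have Sz_sqr_le : hnorm q (S z) ^+ 2 <=
      Num.sqrt (cabs (q (S z) z) ^+ 2 + hnorm q (S z) ^+ 4).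
    rewrite -(ger0_norm (sqr_ge0 (hnorm q (S z)))) -sqrtr_sqr -exprM.
    by rewrite ler_sqrt ?lerDr ?addr_ge0 ?sqr_ge0 ?exprn_ge0 ?hnorm_ge0.
  have Sz_le_K := le_trans Sz_sqr_le fz_le.
  rewrite -(ger0_norm (hnorm_ge0 q (S z))) -sqrtr_sqr ler_sqrt //.
  exact: le_trans (sqr_ge0 _) Sz_le_K.
have k_ge0 := sqrtr_ge0 K; set k := Num.sqrt K in S_unit k_ge0.
have S_le := hnormS_le S_unit; have T_le := hnormT_le k_ge0 S_le.
split; [exists (k ^+ 2 + k) | exists (k ^+ 2 * k ^+ 2 + k ^+ 2)] => _ [z z1 <-];
  have {}z1 : hnorm q z = 1 := z1; have := T_le z; rewrite z1 mulr1 => Tz_le.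
- apply: le_trans (cauchy_schwarz hq _ _) _; rewrite z1 mulr1.
  apply: le_trans (hnormD_le hq _ _) _.
  by have := S_le z; rewrite z1 mulr1; lra.
- apply: le_trans (hnormD_le hq _ _) _.
  exact: lerD (le_trans (T_le (T z)) (ler_wpM2l (sqr_ge0 k) Tz_le)) Tz_le.
Qed.

End SharpProduct.

Theorem corollary2p4 (R : realType) (H : lmodType R[i]) (ip : H -> H -> R[i])
  (A S : H -> H) :
  is_complex_hilbert ip -> positive_op ip A -> in_BA ip A S ->
  dnumradA ip A S ^+ 2 <=
    numradA ip A (fun z => sharpA ip A S (S z) + S z) ^+ 2
    + opnormA ip A (fun z =>
        sharpA ip A S (S (sharpA ip A S (S z))) + sharpA ip A S (S z)).
Proof.
move=> hH hA hS.
have hq := ipA_semi_inner_product (hilbert_semi_inner_product hH) hA.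
have sharpA_S u x : ipA ip A (sharpA ip A S (S u)) x = ipA ip A (S u) (S x).
  exact: (ipA_sharpA hH hA.1 hS (S u) x).
exact: dnumrad_sqr_le hq hS.1.1 sharpA_S.
Qed.
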